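(* Let $n\ge 1$ and $k\ge 3$ be integers and set $p:=k-2>0$. Let $\{v_1,\dots,v_n\}$ be an orthonormal basis of $\mathbb{R}^n$, $V=[v_1,\dots,v_n]$, and let $\lambda_1,\dots,\lambda_n,\kappa_1,\dots,\kappa_n\in\mathbb{R}$. Define the $k$th-order tensor $\mathcal A=\sum_{r=1}^n \lambda_r v_r^{\otimes k}$ and the matrix $K=\sum_{r=1}^n\kappa_r v_r v_r^\top$, and consider the closed-loop system $$\dot x = Kx+\mathcal A x^{k-1},\qquad x(t)\in\mathbb{R}^n.$$ Define the modal coordinates $y(t):=V^\top x(t)$, i.e. $y_r(t)=v_r^\top x(t)$, and $y_{r,0}:=y_r(0)=v_r^\top x(0)$. Then the dynamics decouple as $$\dot y_r=\kappa_r y_r+\lambda_r y_r^{k-1},\qquad r=1,\dots,n,$$ and the state is reconstructed by $x(t)=\sum_{r=1}^n y_r(t)v_r$. Moreover: (i) If $\kappa_r\neq 0$, then on any time interval on which $y_r(t)\neq 0$, the trajectory satisfies $$y_r(t)=y_{r,0}\Big[e^{-p\kappa_r t}-\frac{\lambda_r}{\kappa_r}\,y_{r,0}^{p}\big(1-e^{-p\kappa_r t}\big)\Big]^{-1/p},$$ valid on the maximal interval on which the bracketed term is positive. (ii) If $\kappa_r=0$, then on any time interval on which $y_r(t)\neq 0$, $$y_r(t)=y_{r,0}\big(1-p\lambda_r y_{r,0}^{p}\,t\big)^{-1/p},$$ valid on the maximal interval on which $1-p\lambda_r y_{r,0}^p t>0$.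
   Context: For $v\in\mathbb{R}^n$, $v^{\otimes k}$ is the $k$th-order tensor with entries $(v^{\otimes k})_{i_1\cdots i_k}=v_{i_1}\cdots v_{i_k}$. For a $k$th-order tensor $\mathcal A=(a_{i_1\cdots i_k})$ and $x\in\mathbb{R}^n$, $\mathcal A x^{k-1}\in\mathbb{R}^n$ is defined by $(\mathcal A x^{k-1})_i=\sum_{i_2,\dots,i_k=1}^n a_{i i_2\cdots i_k}x_{i_2}\cdots x_{i_k}$. A tensor of the form $\sum_r\lambda_r v_r^{\otimes k}$ with $\{v_r\}$ orthonormal is called orthogonally decomposable (ODECO). *)

From HB Require Import structures.
From mathcomp Require Import all_boot all_order all_algebra.
From mathcomp Require Import all_classical all_reals all_analysis.
Set Implicit Arguments. Unset Strict Implicit. Unset Printing Implicit Defensive.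
Import Order.TTheory GRing.Theory Num.Theory numFieldNormedType.Exports.
Local Open Scope ring_scope.

(* A tensor on R^n: entries indexed by sequences of indices (i_1,...,i_k);
   only sequences of length k (the order) are meaningful. *)
Definition tensor (R : Type) (n : nat) := seq 'I_n -> R.

Definition tpow (R : comRingType) (n : nat) (v : 'I_n -> R) : tensor R n :=
  fun idx => \prod_(j <- idx) v j.

Definition tapp (R : comRingType) (n k : nat) (A : tensor R n) (x : 'I_n -> R)
  : 'I_n -> R :=
  fun i => \sum_(t : (k.-1).-tuple 'I_n) A (i :: val t) * \prod_(j <- val t) x j.

Definition odeco (R : comRingType) (n : nat) (V : 'M[R]_n) (lam : 'I_n -> R)
  : tensor R n :=
  fun idx => \sum_(r < n) lam r * tpow (fun i => V i r) idx.

Definition Kmat (R : comRingType) (n : nat) (V : 'M[R]_n) (kap : 'I_n -> R)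
  : 'M[R]_n :=
  \sum_(r < n) kap r *: (col r V *m (col r V)^T).

Definition modal (R : comRingType) (n : nat) (V : 'M[R]_n) (x : R -> 'I_n -> R)
  (r : 'I_n) (t : R) : R :=
  \sum_(i < n) V i r * x t i.

Definition bracket_i (R : realType) (p : nat) (kap lam y0 t : R) : R :=
  expR (- (p%:R * kap * t)) - lam / kap * y0 ^+ p * (1 - expR (- (p%:R * kap * t))).

Definition bracket_ii (R : realType) (p : nat) (lam y0 t : R) : R :=
  1 - p%:R * lam * y0 ^+ p * t.

Definition bern_sol (R : realType) (p : nat) (y0 B : R) : R :=
  y0 * B `^ (- (p%:R)^-1).

From HB Require Import structures.
From mathcomp Require Import all_boot all_order all_algebra.
From mathcomp Require Import all_classical all_reals all_analysis.
From mathcomp Require Import ring lra.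
Import Order.TTheory GRing.Theory Num.Theory numFieldNormedType.Exports.
Set Implicit Arguments. Unset Strict Implicit.
Local Open Scope ring_scope.
Local Open Scope classical_set_scope.

(* Orthonormality of the columns of V gives
   v_r^T (K x + A x^{k-1}) = kap_r y_r + lam_r y_r^{k-1}, so the modal
   coordinates obey decoupled scalar Bernoulli equations, and orthonormality of
   the rows gives x = sum_r y_r v_r.  If a Bernoulli trajectory y does not vanish
   on an interval J containing 0, then B = (y_0 / y)^p solves the linear equation
   B' = -p (kap B + lam y_0^p) with B(0) = 1, and so does the bracket of the
   closed formula; uniqueness for linear equations identifies the two, and since
   y keeps the sign of y_0 on J, the p-th root can be taken: y = y_0 B^{-1/p}. *)

Lemma sum_tuple_prod (R : comPzSemiRingType) n m (f : 'I_n -> R) :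
  \sum_(t : m.-tuple 'I_n) \prod_(j <- t) f j = (\sum_j f j) ^+ m.
Proof.
elim: m => [|m IHm].
  rewrite (big_pred1 [tuple]) ?big_nil ?expr0 // => t.
  by case: t => [[] // ?]; apply/eqP/val_inj.
rewrite (reindex (fun p : 'I_n * m.-tuple 'I_n => [tuple of p.1 :: p.2])) /=.
  rewrite -(pair_bigA _ (fun i (t : m.-tuple 'I_n) => \prod_(j <- i :: val t) f j)).
  rewrite exprS big_distrl /=; apply: eq_bigr => i _.
  by rewrite -IHm big_distrr /=; apply: eq_bigr => t _; rewrite big_cons.
exists (fun t : m.+1.-tuple 'I_n => (thead t, [tuple of behead t])).
  by move=> [i t] _ /=; rewrite theadE; congr pair; apply: val_inj.
by move=> t _; rewrite [RHS]tuple_eta; apply: val_inj.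
Qed.

Lemma sum_kronecker (R : pzSemiRingType) n (g : 'I_n -> R) r :
  \sum_s (r == s)%:R * g s = g r.
Proof.
rewrite (bigD1 r) //= eqxx mul1r big1 ?addr0 // => s.
by rewrite eq_sym => /negbTE ->; rewrite mul0r.
Qed.

Section ModalDecoupling.
Variables (R : comNzRingType) (n : nat) (V : 'M[R]_n).

Lemma Kmat_mulE kap (xt : 'I_n -> R) i :
  \sum_j Kmat V kap i j * xt j = \sum_s V i s * (kap s * \sum_j V j s * xt j).
Proof.
under eq_bigr => j _ do rewrite /Kmat summxE big_distrl /=.
rewrite exchange_big /=; apply: eq_bigr => s _.
rewrite !big_distrr /=; apply: eq_bigr => j _.
by rewrite !mxE big_ord1 !mxE; ring.
Qed.

Lemma tapp_odecoE k lam (xt : 'I_n -> R) i :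
  tapp k (odeco V lam) xt i =
  \sum_s V i s * (lam s * (\sum_j V j s * xt j) ^+ k.-1).
Proof.
rewrite /tapp /odeco.
under eq_bigr => t _ do rewrite big_distrl /=.
rewrite exchange_big /=; apply: eq_bigr => s _.
rewrite -sum_tuple_prod !big_distrr /=; apply: eq_bigr => t _.
by rewrite /tpow big_cons big_split /=; ring.
Qed.

Lemma closed_loop_modalE k lam kap (xt : 'I_n -> R) i :
  \sum_j Kmat V kap i j * xt j + tapp k (odeco V lam) xt i =
  \sum_s V i s * (kap s * (\sum_j V j s * xt j)
                  + lam s * (\sum_j V j s * xt j) ^+ k.-1).
Proof.
rewrite Kmat_mulE tapp_odecoE -big_split /=.
by apply: eq_bigr => s _; rewrite mulrDr.
Qed.

Hypothesis orthoV : V^T *m V = 1%:M.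

Lemma orthonormal_cols r s : \sum_i V i r * V i s = (r == s)%:R.
Proof.
have := congr1 (fun M : 'M[R]_n => M r s) orthoV; rewrite !mxE => <-.
by apply: eq_bigr => i _; rewrite mxE.
Qed.

Lemma orthonormal_rows i j : \sum_r V i r * V j r = (i == j)%:R.
Proof.
have := congr1 (fun M : 'M[R]_n => M i j) (mulmx1C orthoV); rewrite !mxE => <-.
by apply: eq_bigr => r _; rewrite mxE.
Qed.

Lemma modal_projection (g : 'I_n -> R) r :
  \sum_i V i r * (\sum_s V i s * g s) = g r.
Proof.
under eq_bigr => i _ do rewrite big_distrr /=.
rewrite exchange_big /= -[RHS]sum_kronecker; apply: eq_bigr => s _.
by rewrite -orthonormal_cols big_distrl /=; apply: eq_bigr => i _; rewrite mulrA.
Qed.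

Lemma modal_reconstruction (xt : 'I_n -> R) i :
  \sum_r (\sum_j V j r * xt j) * V i r = xt i.
Proof.
under eq_bigr => r _ do rewrite big_distrl /=.
rewrite exchange_big /= -[RHS]sum_kronecker; apply: eq_bigr => j _.
by rewrite -orthonormal_rows big_distrl /=; apply: eq_bigr => r _; ring.
Qed.

End ModalDecoupling.

Section PointwiseDerivatives.
Variable R : realType.
Implicit Types (f g : R -> R) (a c x df dg : R).

Lemma is_derive_continuous f x df : is_derive x 1 f df -> {for x, continuous f}.
Proof. by case=> fd _; exact/differentiable_continuous/derivable1_diffP. Qed.

Lemma is_derive_scale c f x df : is_derive x 1 f df ->
  is_derive x 1 (fun s => c * f s) (c * df).
Proof. exact: is_deriveZ. Qed.

Lemma is_derive_mul f g x df dg : is_derive x 1 f df -> is_derive x 1 g dg ->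
  is_derive x 1 (fun s => f s * g s) (f x * dg + g x * df).
Proof. by move=> fd gd; have := is_deriveM fd gd; rewrite mulrfctE. Qed.

Lemma is_derive_opp f x df : is_derive x 1 f df ->
  is_derive x 1 (fun s => - f s) (- df).
Proof. by move=> fd; have := is_deriveN fd; rewrite fctE. Qed.

Lemma is_derive_sub f g x df dg : is_derive x 1 f df -> is_derive x 1 g dg ->
  is_derive x 1 (fun s => f s - g s) (df - dg).
Proof. by move=> fd gd; have := is_deriveB fd gd; rewrite fctE. Qed.

Lemma is_derive_pow f x df m : is_derive x 1 f df ->
  is_derive x 1 (fun s => f s ^+ m) (m%:R * f x ^+ m.-1 * df).
Proof. by move=> fd; have := is_deriveX m fd; rewrite exprfctE. Qed.

Lemma is_derive_inv f x df : f x != 0 -> is_derive x 1 f df ->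
  is_derive x 1 (fun s => (f s)^-1) (- df / f x ^+ 2).
Proof.
move=> fx_neq0 fd; have := is_deriveV fx_neq0 fd.
by rewrite /GRing.scale /= mulNr mulrC -mulNr.
Qed.

Lemma is_derive_expR_comp f x df : is_derive x 1 f df ->
  is_derive x 1 (fun s => expR (f s)) (expR (f x) * df).
Proof. by move=> fd; have := is_derive1_comp (is_derive_expR (f x)) fd. Qed.

Lemma is_derive_powR_comp f x df a : 0 < f x -> is_derive x 1 f df ->
  is_derive x 1 (fun s => f s `^ a) (a * f x `^ (a - 1) * df).
Proof. by move=> fx_gt0 fd; have := is_derive1_comp (is_derive1_powR a fx_gt0) fd. Qed.

End PointwiseDerivatives.

Section IntervalCalculus.
Variable R : realType.
Implicit Types (f u v y : R -> R) (J : set R).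

Lemma derive0_constant_on f J a b : is_interval J ->
  (forall s, J s -> is_derive s 1 f 0) -> J a -> J b -> f a = f b.
Proof.
move=> iJ fd.
wlog ab : a b / a < b.
  move=> wl Ja Jb; case: (ltgtP a b) => [ab|ba|-> //]; first exact: wl.
  by apply/esym/wl.
move=> Ja Jb.
have inJ z : a <= z <= b -> J z by move=> ?; apply: (iJ a b).
have fd_ab z : z \in `]a, b[%R -> is_derive z 1 f ((fun=> 0) z).
  by rewrite in_itv /= => /andP[az zb]; apply/fd/inJ; rewrite !ltW.
have fc_ab : {within `[a, b], continuous f}.
  apply: continuous_in_subspaceT => z; rewrite inE /= in_itv /= => /inJ Jz.
  exact: is_derive_continuous (fd z Jz).
have [c _] := MVT ab fd_ab fc_ab.
by rewrite mul0r => /eqP; rewrite subr_eq0 => /eqP.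
Qed.

Lemma nonvanishing_same_sign y J a b : is_interval J ->
  (forall s, J s -> {for s, continuous y}) -> (forall s, J s -> y s != 0) ->
  J a -> J b -> 0 < y a * y b.
Proof.
move=> iJ yc yn.
wlog ab : a b / a <= b.
  move=> wl Ja Jb; case: (leP a b) => [ab|/ltW ba]; first exact: wl.
  by rewrite mulrC; apply: wl.
move=> Ja Jb.
have inJ z : a <= z <= b -> J z by move=> ?; apply: (iJ a b).
rewrite ltNge; apply/negP => yab_le0.
have yc_ab : {within `[a, b], continuous y}.
  by apply: continuous_in_subspaceT => z; rewrite inE /= in_itv /= => /inJ/yc.
have y_range : Num.min (y a) (y b) <= 0 <= Num.max (y a) (y b).
  rewrite ge_min le_max; have := yn a Ja; rewrite neq_lt => /orP[ya|ya].
    have yb : 0 <= y b by nra.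
    by rewrite (ltW ya) yb orbT.
  have yb : y b <= 0 by nra.
  by rewrite yb (ltW ya) !orbT.
have [c] := IVT ab yc_ab y_range; rewrite in_itv /= => /inJ Jc yc0.
by have := yn c Jc; rewrite yc0 eqxx.
Qed.

Lemma linear_ode_unique (c d : R) u v J : is_interval J -> J 0 ->
  (forall s, J s -> is_derive s 1 u (c * u s + d)) ->
  (forall s, J s -> is_derive s 1 v (c * v s + d)) ->
  u 0 = v 0 -> forall t, J t -> u t = v t.
Proof.
move=> iJ J0 ud vd uv0 t Jt.
pose G s := (u s - v s) * expR (- c * s).
have Gd s : J s -> is_derive s 1 G 0.
  move=> Js; apply: is_derive_eq (is_derive_mul (is_derive_sub (ud s Js) (vd s Js))
    (is_derive_expR_comp (is_derive_scale (- c) (is_derive_id s 1)))) _.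
  by ring.
have := derive0_constant_on iJ Gd Jt J0.
rewrite /G uv0 subrr mul0r => /eqP.
by rewrite mulf_eq0 (gt_eqF (expR_gt0 _)) orbF subr_eq0 => /eqP.
Qed.

End IntervalCalculus.

Section BernoulliEquation.
Variables (R : realType) (p : nat) (ka la : R).
Hypothesis p_gt0 : (0 < p)%N.

Let pnat_neq0 : p%:R != 0 :> R.
Proof. by rewrite pnatr_eq0 -lt0n. Qed.

Lemma powR_exprNV (r : R) : 0 < r -> (r ^+ p) `^ (- p%:R^-1) = r^-1.
Proof.
move=> r_gt0.
by rewrite -powR_mulrn ?ltW // -powRrM mulrN divff ?powR_inv1 ?ltW.
Qed.

Lemma exprn_powRNV (B : R) : 0 < B -> (B `^ (- p%:R^-1)) ^+ p = B^-1.
Proof.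
move=> B_gt0.
by rewrite -powR_mulrn ?powR_ge0 // -powRrM mulNr mulVf ?powR_inv1 ?ltW.
Qed.

Lemma bern_sol_ratio (y0 yt : R) : 0 < y0 / yt ->
  yt = bern_sol p y0 ((y0 / yt) ^+ p).
Proof.
move=> ratio_gt0.
have y0_neq0 : y0 != 0 by apply: contraTneq ratio_gt0 => ->; rewrite mul0r ltxx.
by rewrite /bern_sol powR_exprNV // invf_div mulrC divfK.
Qed.

Lemma ratio_expn_is_derive (y : R -> R) (y0 s : R) : y s != 0 ->
  is_derive s 1 y (ka * y s + la * y s ^+ p.+1) ->
  is_derive s 1 (fun s => (y0 / y s) ^+ p)
    (- (p%:R * ka) * (y0 / y s) ^+ p - p%:R * la * y0 ^+ p).
Proof.
move=> ys_neq0 yd.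
apply: is_derive_eq (is_derive_pow p (is_derive_scale y0 (is_derive_inv ys_neq0 yd))) _.
rewrite -(prednK p_gt0) /= !exprMn !exprVn !exprS.
(* [field] only handles constant exponents, hence the abstraction of the powers. *)
move: (y0 ^+ p.-1) (y s ^+ p.-1) (expf_neq0 p.-1 ys_neq0) => Y0 Ys Ys_neq0.
by field; rewrite ys_neq0 Ys_neq0.
Qed.

Lemma bern_sol_is_derive (y0 : R) (B : R -> R) t : 0 < B t ->
  is_derive t 1 B (- (p%:R * ka) * B t - p%:R * la * y0 ^+ p) ->
  is_derive t 1 (fun s => bern_sol p y0 (B s))
    (ka * bern_sol p y0 (B t) + la * bern_sol p y0 (B t) ^+ p.+1).
Proof.
move=> Bt_gt0 Bd.
apply: is_derive_eq (is_derive_scale y0 (is_derive_powR_comp (- p%:R^-1) Bt_gt0 Bd)) _.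
rewrite /bern_sol powRB ?powRr1 ?ltW ?(gt_eqF Bt_gt0) ?implybT //.
rewrite exprMn !exprS exprn_powRNV //.
move: (y0 ^+ p) (B t `^ _) (gt_eqF Bt_gt0) pnat_neq0 => Y Ba Bt_neq0 P_neq0.
by field; rewrite Bt_neq0 P_neq0.
Qed.

Lemma bernoulli_trajectory (y : R -> R) (J : set R) (B : R -> R) :
  is_interval J -> J 0 ->
  (forall s, J s -> is_derive s 1 y (ka * y s + la * y s ^+ p.+1)) ->
  (forall s, J s -> y s != 0) ->
  (forall s : R, is_derive s 1 B (- (p%:R * ka) * B s - p%:R * la * y 0 ^+ p)) ->
  B 0 = 1 ->
  forall t, J t -> 0 < B t /\ y t = bern_sol p (y 0) (B t).
Proof.
move=> iJ J0 yd yn Bd B0 t Jt.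
have y0_neq0 := yn 0 J0; have yt_neq0 := yn t Jt.
have ratio_eq : (y 0 / y t) ^+ p = B t.
  apply: (@linear_ode_unique _ _ _ (fun s => (y 0 / y s) ^+ p) B J iJ J0) => //.
    by move=> s Js; apply: ratio_expn_is_derive (yd s Js); exact: yn.
  by rewrite divff // expr1n B0.
have ratio_gt0 : 0 < y 0 / y t.
  have -> : y 0 / y t = y t * y 0 / y t ^+ 2 by field.
  rewrite divr_gt0 ?exprn_even_gt0 //.
  exact: nonvanishing_same_sign iJ (fun s Js => is_derive_continuous (yd s Js)) yn Jt J0.
split; first by rewrite -ratio_eq exprn_gt0.
by rewrite -ratio_eq; exact: bern_sol_ratio.
Qed.

Lemma bracket_i_is_derive (y0 t : R) : ka != 0 ->
  is_derive t 1 (bracket_i p ka la y0)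
    (- (p%:R * ka) * bracket_i p ka la y0 t - p%:R * la * y0 ^+ p).
Proof.
move=> ka_neq0.
have Ed := is_derive_expR_comp (is_derive_opp (is_derive_scale (p%:R * ka) (is_derive_id t 1))).
rewrite /bracket_i.
apply: is_derive_eq (is_derive_sub Ed
  (is_derive_scale (la / ka * y0 ^+ p) (is_derive_sub (is_derive_cst (1 : R) t 1) Ed))) _.
move: (y0 ^+ p) (expR _) => Y E.
by field.
Qed.

Lemma bracket_i_at0 (y0 : R) : bracket_i p ka la y0 0 = 1.
Proof. by rewrite /bracket_i mulr0 oppr0 expR0 subrr mulr0 subr0. Qed.

Lemma bracket_ii_is_derive (y0 t : R) : ka = 0 ->
  is_derive t 1 (bracket_ii p la y0)
    (- (p%:R * ka) * bracket_ii p la y0 t - p%:R * la * y0 ^+ p).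
Proof.
move=> ->; rewrite /bracket_ii.
apply: is_derive_eq (is_derive_sub (is_derive_cst (1 : R) t 1)
  (is_derive_scale (p%:R * la * y0 ^+ p) (is_derive_id t 1))) _.
by rewrite mulr0 oppr0 mul0r add0r mulr1 sub0r.
Qed.

Lemma bracket_ii_at0 (y0 : R) : bracket_ii p la y0 0 = 1.
Proof. by rewrite /bracket_ii mulr0 subr0. Qed.

End BernoulliEquation.

Lemma modal_is_derive (R : realType) n k (V : 'M[R]_n) (lam kap : 'I_n -> R)
    (x : R -> 'I_n -> R) (r : 'I_n) (t : R) :
  V^T *m V = 1%:M ->
  (forall i, is_derive t 1 (fun s => x s i)
     (\sum_(j < n) Kmat V kap i j * x t j + tapp k (odeco V lam) (x t) i)) ->
  is_derive t 1 (modal V x r)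
    (kap r * modal V x r t + lam r * modal V x r t ^+ k.-1).
Proof.
move=> orthoV xd.
have := is_derive_sum (fun i => is_derive_scale (V i r) (xd i)).
have -> : \sum_i (fun s => V i r * x s i) = modal V x r.
  by apply/funext => s; rewrite fct_sumE.
move/is_derive_eq; apply.
under eq_bigr => i _ do rewrite closed_loop_modalE.
by rewrite modal_projection.
Qed.

Theorem theorem1 (R : realType) (n k : nat) (V : 'M[R]_n)
  (lam kap : 'I_n -> R) (I : set R) (x : R -> 'I_n -> R) :
  (1 <= n)%N -> (3 <= k)%N ->
  V^T *m V = 1%:M ->
  is_interval I -> open I -> I 0 ->
  (forall t, I t -> forall i,
      is_derive t 1 (fun s => x s i)
        (\sum_(j < n) Kmat V kap i j * x t j + tapp k (odeco V lam) (x t) i)) ->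
  [/\ (forall r t, I t ->
         is_derive t 1 (modal V x r)
           (kap r * modal V x r t + lam r * modal V x r t ^+ (k - 1))),
      (forall t i, x t i = \sum_(r < n) modal V x r t * V i r),
      (forall r, kap r != 0 ->
         (forall J : set R, J `<=` I -> is_interval J -> J 0 ->
            (forall t, J t -> modal V x r t != 0) ->
            forall t, J t ->
              0 < bracket_i (k - 2) (kap r) (lam r) (modal V x r 0) t /\
              modal V x r t = bern_sol (k - 2) (modal V x r 0)
                 (bracket_i (k - 2) (kap r) (lam r) (modal V x r 0) t)) /\
         (forall t, (forall s, Num.min 0 t <= s <= Num.max 0 t ->
                      0 < bracket_i (k - 2) (kap r) (lam r) (modal V x r 0) s) ->
            is_derive t 1
              (fun s => bern_sol (k - 2) (modal V x r 0)
                 (bracket_i (k - 2) (kap r) (lam r) (modal V x r 0) s))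
              (kap r * bern_sol (k - 2) (modal V x r 0)
                 (bracket_i (k - 2) (kap r) (lam r) (modal V x r 0) t)
               + lam r * bern_sol (k - 2) (modal V x r 0)
                 (bracket_i (k - 2) (kap r) (lam r) (modal V x r 0) t) ^+ (k - 1))))
    & (forall r, kap r = 0 ->
         (forall J : set R, J `<=` I -> is_interval J -> J 0 ->
            (forall t, J t -> modal V x r t != 0) ->
            forall t, J t ->
              0 < bracket_ii (k - 2) (lam r) (modal V x r 0) t /\
              modal V x r t = bern_sol (k - 2) (modal V x r 0)
                 (bracket_ii (k - 2) (lam r) (modal V x r 0) t)) /\
         (forall t, (forall s, Num.min 0 t <= s <= Num.max 0 t ->
                      0 < bracket_ii (k - 2) (lam r) (modal V x r 0) s) ->
            is_derive t 1
              (fun s => bern_sol (k - 2) (modal V x r 0)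
                 (bracket_ii (k - 2) (lam r) (modal V x r 0) s))
              (lam r * bern_sol (k - 2) (modal V x r 0)
                 (bracket_ii (k - 2) (lam r) (modal V x r 0) t) ^+ (k - 1))))].
Proof.
move=> _ k_ge3 orthoV iI _ I0 xd.
have [p p_gt0 [-> km1]] : exists2 p, (0 < p)%N & (k - 2 = p)%N /\ (k - 1 = p.+1)%N.
  by exists (k - 2)%N; rewrite ?subn_gt0 // -subSn ?subSS // ltnW.
have modal_ode r t : I t -> is_derive t 1 (modal V x r)
    (kap r * modal V x r t + lam r * modal V x r t ^+ p.+1).
  by move=> It; rewrite -km1 subn1; apply: modal_is_derive (xd t It).
have at_t t (P : R -> Prop) : (forall s, Num.min 0 t <= s <= Num.max 0 t -> P s) -> P t.
  by apply; rewrite ge_min le_max lexx !orbT.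
rewrite km1; split=> [r t It|t i|r kap_neq0|r kap0].
- exact: modal_ode.
- by rewrite /modal modal_reconstruction.
- split=> [J JI iJ J0 yn t Jt|t /at_t B_gt0].
    apply: (@bernoulli_trajectory _ p (kap r) (lam r) p_gt0 (modal V x r) J
             (bracket_i p (kap r) (lam r) (modal V x r 0)) iJ J0 _ yn _ _ t Jt).
    + by move=> s Js; apply/modal_ode/JI.
    + by move=> s; apply: bracket_i_is_derive.
    + exact: bracket_i_at0.
  by apply: (bern_sol_is_derive p_gt0 B_gt0); apply: bracket_i_is_derive.
- split=> [J JI iJ J0 yn t Jt|t /at_t B_gt0].
    apply: (@bernoulli_trajectory _ p (kap r) (lam r) p_gt0 (modal V x r) J
             (bracket_ii p (lam r) (modal V x r 0)) iJ J0 _ yn _ _ t Jt).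
    + by move=> s Js; apply/modal_ode/JI.
    + by move=> s; apply: bracket_ii_is_derive.
    + exact: bracket_ii_at0.
  apply: is_derive_eq (bern_sol_is_derive (ka := 0) p_gt0 B_gt0 _) _.
    exact: bracket_ii_is_derive.
  by rewrite mul0r add0r.
Qed.
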